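(* For all program states $(s,h)$ and all $f\in\mathbb{T}$, $$\mathsf{ert}[\![x:=\langle e\rangle]\!](f)(s,h)=\begin{cases} f(s[x\mapsto h(s(e))],h) & \text{if } s(e)\in\mathrm{dom}(h),\\ \infty & \text{if } s(e)\notin\mathrm{dom}(h),\end{cases}$$ where $\mathsf{ert}[\![x:=\langle e\rangle]\!](f)=\inf v\colon [e\mapsto v]\oplus([e\mapsto v]\mathbin{-\!\!\ominus} f[x/v])$ with $v$ a fresh variable.
   Context: Fix a finite set $\mathrm{Vars}$ of variables. A stack is $s\colon\mathrm{Vars}\to\mathbb{N}$; a heap is a partial map $h$ from a finite set $\mathrm{dom}(h)\subseteq\mathbb{N}_{>0}$ to $\mathbb{N}$; $h_1\perp h_2$ means disjoint domains, and then $h_1\star h_2$ is their union. $\mathsf{States}$ is the set of pairs $(s,h)$; $s(e)$ is the value of a heap-independent arithmetic expression $e$; $s[x\mapsto v]$ is the updated stack. $\mathbb{T}$ is the set of functions $\mathsf{States}\to[0,\infty]$. Truncated subtraction: $a\dot- b=\max(a-b,0)$, $\infty\dot- b=\infty$ for finite $b$, $a\dot-\infty=0$. $(f\oplus g)(s,h)=\min\{f(s,h_1)+g(s,h_2)\mid h=h_1\star h_2\}$; $(f\mathbin{-\!\!\ominus} g)(s,h)=\sup\{g(s,h\star h')\dot- f(s,h')\mid h'\perp h\}$; $(\inf v\colon f)(s,h)=\inf_{n\in\mathbb{N}}f(s[v\mapsto n],h)$; $f[x/v](s,h)=f(s[x\mapsto s(v)],h)$. $[e\mapsto e'](s,h)=0$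 if $\mathrm{dom}(h)=\{s(e)\}$ and $h(s(e))=s(e')$, and $\infty$ otherwise. *)

(* values in [0,oo] are modelled as extended reals
   \bar R (R : realType); nonnegativity of f is an explicit hypothesis. *)
From HB Require Import structures.
From mathcomp Require Import all_boot all_order all_algebra.
From mathcomp Require Import boolp classical_sets reals constructive_ereal ereal.
Set Implicit Arguments. Unset Strict Implicit. Unset Printing Implicit Defensive.
Import Order.TTheory GRing.Theory Num.Theory.
Local Open Scope classical_set_scope.
Local Open Scope ereal_scope.

Section SL.
Variable Vars : finType.
Variable R : realType.

Definition stack := Vars -> nat.

Record heap := Heap {
  hfun : nat -> option nat;
  hfin : exists N, forall n, (N <= n)%N -> hfun n = None;
  hpos : hfun 0%N = None }.

Definition in_dom (h : heap) (l : nat) : Prop := hfun h l <> None.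

Definition hdisj (h1 h2 : heap) : Prop :=
  forall l, ~ (in_dom h1 l /\ in_dom h2 l).

Definition hsplit (h h1 h2 : heap) : Prop :=
  hdisj h1 h2 /\
  forall l, hfun h l = match hfun h1 l with Some n => Some n | None => hfun h2 l end.

Definition state := (stack * heap)%type.
Definition T := state -> \bar R.

Definition expr := stack -> nat.

Definition upd (s : stack) (x : Vars) (n : nat) : stack :=
  fun y => if y == x then n else s y.

Definition tsub (a b : \bar R) : \bar R :=
  match b with
  | +oo => 0
  | _ => maxe (a - b) 0
  end.

Definition sepcon (f g : T) : T := fun st =>
  ereal_inf [set r | exists h1 h2 : heap,
     hsplit st.2 h1 h2 /\ r = f (st.1, h1) + g (st.1, h2)].

Definition sepimp (f g : T) : T := fun st =>
  ereal_sup [set r | exists h' hh : heap,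
     hdisj st.2 h' /\ hsplit hh st.2 h' /\ r = tsub (g (st.1, hh)) (f (st.1, h'))].

Definition infv (v : Vars) (f : T) : T := fun st =>
  ereal_inf [set f (upd st.1 v n, st.2) | n in @setT nat].

Definition subst (f : T) (x v : Vars) : T := fun st =>
  f (upd st.1 x (st.1 v), st.2).

Definition pto (e e' : expr) : T := fun st =>
  if `[< forall l, hfun st.2 l = if l == e st.1 then Some (e' st.1) else None >]
  then 0 else +oo.

Definition var_expr (v : Vars) : expr := fun s => s v.

Definition ert_lookup (x : Vars) (e : expr) (v : Vars) (f : T) : T :=
  infv v (sepcon (pto e (var_expr v)) (sepimp (pto e (var_expr v)) (subst f x v))).

End SL.

From HB Require Import structures.
From mathcomp Require Import all_boot all_order all_algebra.
From mathcomp Require Import boolp classical_sets reals constructive_ereal ereal.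
Set Implicit Arguments. Unset Strict Implicit. Unset Printing Implicit Defensive.
Import Order.TTheory GRing.Theory Num.Theory.
Local Open Scope classical_set_scope.
Local Open Scope ereal_scope.

(* [e |-> v] is finite only on the one-cell heap {s(e) |-> v}.  Hence, for a
   fixed value n of v, the separating conjunction must cut exactly the cell
   s(e) out of h, and only when h(s(e)) = n; the magic wand then has a single
   finite contribution, which puts that cell back, so the whole term is
   f(s[x |-> n], h) when h(s(e)) = n and +oo otherwise.  The infimum over n
   picks out n = h(s(e)). *)

Section ExtendedRealExtrema.
Variable R : realType.
Implicit Types (S : set (\bar R)) (a : \bar R).

Lemma ereal_sup_max S a : S a -> ubound S a -> ereal_sup S = a.
Proof.
move=> Sa ubSa; apply/le_anti/andP; split; first exact/ereal_supP.
exact: ereal_sup_ubound.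
Qed.

Lemma ereal_inf_min S a : S a -> lbound S a -> ereal_inf S = a.
Proof.
move=> Sa lbSa; apply/le_anti/andP; split; first exact: ereal_inf_lbound.
exact/ereal_infP.
Qed.

Lemma tsub_ge0 a (b : \bar R) : 0 <= tsub a b.
Proof. by case: b => //= *; rewrite le_max lexx orbT. Qed.

Lemma tsube0 a : tsub a 0 = maxe a 0.
Proof. by rewrite /tsub sube0. Qed.

End ExtendedRealExtrema.

Lemma heap_ext (h1 h2 : heap) : hfun h1 =1 hfun h2 -> h1 = h2.
Proof.
case: h1 h2 => f1 fin1 pos1 [f2 fin2 pos2] /= /funext f12; subst f2.
by rewrite (Prop_irrelevance fin1 fin2) (Prop_irrelevance pos1 pos2).
Qed.

Definition emp_heap : heap :=
  @Heap (fun _ => None) (ex_intro _ 0%N (fun _ _ => erefl)) erefl.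

Definition sing_fun (L n l : nat) : option nat :=
  if l == L then Some n else None.

Lemma dom_gt0 (h : heap) L n : hfun h L = Some n -> (0 < L)%N.
Proof. by case: L => // hL; move: (hpos h); rewrite hL. Qed.

Definition sing_heap (L n : nat) (L_gt0 : (0 < L)%N) : heap.
Proof.
refine (@Heap (sing_fun L n) (ex_intro _ L.+1 _) _); rewrite /sing_fun.
- by move=> l ltLl; rewrite ifN // neq_ltn ltLl orbT.
- by rewrite ifN // eq_sym -lt0n.
Defined.

Definition rem_heap (h : heap) (L : nat) : heap.
Proof.
refine (@Heap (fun l => if l == L then None else hfun h l) _ _).
- by case: (hfin h) => N hN; exists N => n leNn; case: ifP => // _; apply: hN.
- by case: ifP => // _; apply: hpos.
Defined.

Lemma hsplitC h h1 h2 : hsplit h h1 h2 -> hsplit h h2 h1.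
Proof.
move=> [disj12 hE]; split=> [l [d2 d1] | l]; first exact: (disj12 l).
rewrite hE; case E1: (hfun h1 l) => [a|]; case E2: (hfun h2 l) => [b|] //.
by case: (disj12 l); rewrite /in_dom E1 E2.
Qed.

Lemma hsplit_emp_r h : hsplit h h emp_heap.
Proof. by split=> [l [] //| l /=]; case: (hfun h l). Qed.

Lemma hsplit_sing_rem h L n (hL : hfun h L = Some n) :
  hsplit h (sing_heap n (dom_gt0 hL)) (rem_heap h L).
Proof.
split=> [l [] | l]; rewrite /in_dom /= /sing_fun.
  by case: (l == L) => [_|] /(_ erefl).
by case: eqVneq => [->|].
Qed.

Lemma hsplit_singE h h1 h2 L n : hsplit h h1 h2 -> hfun h1 =1 sing_fun L n ->
  hfun h L = Some n /\ h2 = rem_heap h L.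
Proof.
move=> [disj12 hE] h1E; split; first by rewrite hE h1E /sing_fun eqxx.
apply: heap_ext => l /=; rewrite hE h1E /sing_fun.
case: eqVneq => [->|//]; case E2: (hfun h2 L) => [b|//].
by case: (disj12 L); rewrite /in_dom h1E /sing_fun eqxx E2.
Qed.

Lemma hsplit_uniq hh hh' h h1 : hsplit hh h h1 -> hsplit hh' h h1 -> hh = hh'.
Proof. by move=> [_ hhE] [_ hh'E]; apply: heap_ext => l; rewrite hhE hh'E. Qed.

Section SeparationConnectives.
Variables (Vars : finType) (R : realType).
Implicit Types (e : expr Vars) (g : T Vars R) (s : stack Vars).

Lemma pto_sing e (e' : expr Vars) s h :
  hfun h =1 sing_fun (e s) (e' s) -> pto R e e' (s, h) = 0.
Proof. by move=> hE; rewrite /pto asboolT. Qed.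

Lemma pto_nsing e (e' : expr Vars) s h :
  ~ hfun h =1 sing_fun (e s) (e' s) -> pto R e e' (s, h) = +oo.
Proof. by move=> hE; rewrite /pto asboolF. Qed.

Lemma sepimp_ge0 (f g : T Vars R) st : 0 <= sepimp f g st.
Proof.
apply: le_ereal_sup_tmp; exists (tsub (g st) (f (st.1, emp_heap))).
  case: st => s h; exists emp_heap, h.
  by split; [case: (hsplit_emp_r h) | split; first exact: hsplit_emp_r].
exact: tsub_ge0.
Qed.

Lemma sepcon_pto_l e (e' : expr Vars) g s h : (forall h2, 0 <= g (s, h2)) ->
  sepcon (pto R e e') g (s, h) =
    if hfun h (e s) == Some (e' s) then g (s, rem_heap h (e s)) else +oo.
Proof.
move=> g_ge0.
have summandE r : [set r | exists h1 h2, hsplit h h1 h2 /\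
      r = pto R e e' (s, h1) + g (s, h2)] r ->
    r = +oo \/ hfun h (e s) = Some (e' s) /\ r = g (s, rem_heap h (e s)).
  move=> [h1 [h2 [h12 ->]]].
  have [h1E|h1N] := pselect (hfun h1 =1 sing_fun (e s) (e' s)).
    have [hL ->] := hsplit_singE h12 h1E.
    by right; rewrite pto_sing // add0e.
  by left; rewrite pto_nsing // addye // gt_eqF // (lt_le_trans ltNy0).
case: eqP => [hL|hN].
- apply: ereal_inf_min; last by move=> r /summandE [->|[_ ->]]; rewrite ?leey.
  exists (sing_heap (e' s) (dom_gt0 hL)), (rem_heap h (e s)).
  by split; [apply: hsplit_sing_rem | rewrite pto_sing // add0e].
- by apply/ereal_inf_pinfty => r /summandE [->|[/hN]].
Qed.

(* The one-cell heap h1 is the only heap on which [e |-> e'] is finite, so the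
   supremum defining the wand is attained at hh = h * h1. *)
Lemma sepimp_pto_l e (e' : expr Vars) g s h hh h1 :
  hsplit hh h h1 -> hfun h1 =1 sing_fun (e s) (e' s) -> 0 <= g (s, hh) ->
  sepimp (pto R e e') g (s, h) = g (s, hh).
Proof.
move=> hh_split h1E g_ge0; apply: ereal_sup_max.
  exists h1, hh; split; first by case: hh_split.
  by split=> //; rewrite pto_sing // tsube0 max_l.
move=> r [h' [hh' [_ [hh'_split ->]]]].
have [h'E|h'N] := pselect (hfun h' =1 sing_fun (e s) (e' s)); last first.
  by rewrite pto_nsing.
have h'_h1 : h' = h1 by apply: heap_ext => l; rewrite h'E h1E.
rewrite h'_h1 in hh'_split.
by rewrite (hsplit_uniq hh'_split hh_split) pto_sing // tsube0 max_l.
Qed.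

End SeparationConnectives.

Section HeapLookup.
Variables (Vars : finType) (R : realType).
Variables (x v : Vars) (e : expr Vars) (f : T Vars R).
Hypotheses (f_ge0 : forall st, 0 <= f st) (v_neq_x : v <> x).
Hypotheses (v_fresh_e : forall s n, e (upd s v n) = e s).
Hypothesis (v_fresh_f : forall s h n, f (upd s v n, h) = f (s, h)).

Lemma upd_same (s : stack Vars) n : upd s v n v = n.
Proof. by rewrite /upd eqxx. Qed.

Lemma upd_updC (s : stack Vars) a b : upd (upd s v a) x b = upd (upd s x b) v a.
Proof.
apply: funext => y; rewrite /upd; case: eqVneq => [->|//].
by case: eqVneq => // xv; case: v_neq_x.
Qed.

Lemma ert_lookup_summand s h n :
  sepcon (pto R e (var_expr v)) (sepimp (pto R e (var_expr v)) (subst f x v))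
    (upd s v n, h) = if hfun h (e s) == Some n then f (upd s x n, h) else +oo.
Proof.
rewrite sepcon_pto_l; last by move=> h2; apply: sepimp_ge0.
rewrite /var_expr v_fresh_e upd_same; case: eqP => [hL|//].
rewrite (sepimp_pto_l (hsplitC (hsplit_sing_rem hL))); last exact: f_ge0.
  by rewrite /subst /= upd_same upd_updC v_fresh_f.
by move=> l; rewrite v_fresh_e upd_same.
Qed.

End HeapLookup.

Theorem mainTheorem13 (Vars : finType) (R : realType)
  (x v : Vars) (e : expr Vars) (f : T Vars R)
  (f_ge0 : forall st, 0 <= f st)
  (v_neq_x : v <> x)
  (v_fresh_e : forall s n, e (upd s v n) = e s)
  (v_fresh_f : forall s h n, f (upd s v n, h) = f (s, h))
  (s : stack Vars) (h : heap) :
  ert_lookup x e v f (s, h) =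
    match hfun h (e s) with
    | Some n => f (upd s x n, h)
    | None => +oo
    end.
Proof.
have summandE n := ert_lookup_summand f_ge0 v_neq_x v_fresh_e v_fresh_f s h n.
rewrite /ert_lookup /infv /=; case hL: (hfun h (e s)) => [n0|].
- apply: ereal_inf_min; first by exists n0; rewrite // summandE hL eqxx.
  by move=> _ [n _ <-]; rewrite summandE hL; case: eqP => [[->]|]; rewrite ?leey.
- by apply/ereal_inf_pinfty => _ [n _ <-]; rewrite summandE hL.
Qed.
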